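(* Let $Q\in\mathbb{R}^{n\times n}$ be symmetric positive definite, $\|x\|=\sqrt{x^TQx}$, $\|u\|_*=\sqrt{u^TQ^{-1}u}$. Let $f\colon\mathbb{R}^n\to\mathbb{R}$ be convex and differentiable with $\|\nabla f(x)-\nabla f(y)\|_*\le L\|x-y\|$ for all $x,y$, with a minimizer $x_\star$, $f_\star=f(x_\star)$. Let $0<t\le1$, and let $\{\theta_k\}_{k=0}^\infty$ be positive with $\theta_0=1$ and $0\le\theta_{k+1}^2-\theta_{k+1}\le\theta_k^2$ for $k\ge0$. Given $x_0$, let $z_0=x_0$ and for $k\ge0$ \[ y_{k+1}=x_k-\tfrac1LQ^{-1}\nabla f(x_k),\quad z_{k+1}=z_k-\tfrac{2t\theta_k}{L}Q^{-1}\nabla f(x_k),\quad x_{k+1}=\Big(1-\tfrac1{\theta_{k+1}}\Big)y_{k+1}+\tfrac1{\theta_{k+1}}z_{k+1}. \] Then for $k=1,2,\dots$, \[ f(y_k)-f_\star\le\frac{L\|x_0-x_\star\|^2}{4t\theta_{k-1}^2}. \]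
   Context: For $t=1/2$ this is Nesterov's accelerated gradient method and for $t=1$ it is OGM (when $Q=I$). *)

From HB Require Import structures.
From mathcomp Require Import all_boot all_order all_algebra.
From mathcomp Require Import all_classical all_reals all_analysis.
Set Implicit Arguments. Unset Strict Implicit. Unset Printing Implicit Defensive.
Import Order.TTheory GRing.Theory Num.Theory.
Import numFieldNormedType.Exports.
Local Open Scope ring_scope.

Definition sym_posdef (R : realType) (n : nat) (Q : 'M[R]_n) : Prop :=
  Q^T = Q /\ forall x : 'cV[R]_n, x != 0 -> 0 < (x^T *m Q *m x) 0 0.

Definition qnorm (R : realType) (n : nat) (Q : 'M[R]_n) (x : 'cV[R]_n) : R :=
  Num.sqrt ((x^T *m Q *m x) 0 0).

Definition qdnorm (R : realType) (n : nat) (Q : 'M[R]_n) (u : 'cV[R]_n) : R :=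
  Num.sqrt ((u^T *m invmx Q *m u) 0 0).

Definition convex_fun (R : realType) (n : nat) (f : 'cV[R]_n -> R) : Prop :=
  forall (x y : 'cV[R]_n) (a : R), 0 <= a <= 1 ->
    f ((1 - a) *: x + a *: y) <= (1 - a) * f x + a * f y.

Definition grad (R : realType) (n : nat) (f : 'cV[R]_n -> R) (x : 'cV[R]_n)
  : 'cV[R]_n := \col_i ('D_(delta_mx i 0 : 'cV[R]_n) f x).

(* Write [g_k = grad f (x_k)] and [h_k = f x_k - |g_k|_*^2 / (2L)]; the descent
   lemma gives [f y_{k+1} <= h_k].
   For a convex [f] with L-Lipschitz gradient the interpolation inequality
   [f x <= f u + <grad f x, x - u> - |grad f x - grad f u|_*^2 / (2L)]
   at [(x_{k+1}, x_k)] and at [(x_{k+1}, x_star)], where [grad f x_star = 0],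
   combined with weights [theta_{k+1} - 1] and [1] (those that make [x_{k+1}] the
   corresponding combination of [y_{k+1}] and [z_{k+1}]), shows that the potential
   [theta_k^2 (h_k - f_star) + L/(4t) |z_{k+1} - x_star|^2] is nonincreasing, with
   slack [(1 - t) theta_{k+1}^2 |g_{k+1}|_*^2 / L].  Its value at [k = 0] is at most
   [L/(4t) |x_0 - x_star|^2], and dividing by [theta_k^2] gives the rate. *)

From HB Require Import structures.
From mathcomp Require Import all_boot all_order all_algebra.
From mathcomp Require Import all_classical all_reals all_analysis.
From mathcomp Require Import ring lra.
Set Implicit Arguments. Unset Strict Implicit. Unset Printing Implicit Defensive.
Import Order.TTheory GRing.Theory Num.Theory.
Import numFieldNormedType.Exports.
Local Open Scope ring_scope.
Local Open Scope classical_set_scope.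

Section Vdot.
Variables (R : comPzRingType) (n : nat).
Implicit Types (u v w : 'cV[R]_n) (M : 'M[R]_n).

Definition vdot u v : R := (u^T *m v) 0 0.

Definition qform M v : R := vdot v (M *m v).

Lemma vdotC u v : vdot u v = vdot v u.
Proof. by rewrite /vdot -[v^T *m u]trmxK trmx_mul !trmxK [RHS]mxE. Qed.

Lemma vdotDr u v w : vdot u (v + w) = vdot u v + vdot u w.
Proof. by rewrite /vdot mulmxDr mxE. Qed.

Lemma vdotZr a u v : vdot u (a *: v) = a * vdot u v.
Proof. by rewrite /vdot -scalemxAr mxE. Qed.

Lemma vdotNr u v : vdot u (- v) = - vdot u v.
Proof. by rewrite /vdot mulmxN mxE. Qed.

Lemma vdotDl u v w : vdot (u + v) w = vdot u w + vdot v w.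
Proof. by rewrite vdotC vdotDr !(vdotC w). Qed.

Lemma vdotNl u v : vdot (- u) v = - vdot u v.
Proof. by rewrite vdotC vdotNr vdotC. Qed.

Lemma vdotBl u v w : vdot (u - v) w = vdot u w - vdot v w.
Proof. by rewrite vdotDl vdotNl. Qed.

Lemma vdotZl a u v : vdot (a *: u) v = a * vdot u v.
Proof. by rewrite vdotC vdotZr vdotC. Qed.

Definition vdotE := (vdotDl, vdotDr, vdotNl, vdotNr, vdotZl, vdotZr).

Lemma vdotMl M u v : vdot (M *m u) v = vdot u (M^T *m v).
Proof. by rewrite /vdot trmx_mul mulmxA. Qed.

Lemma vdot_sym M u v : M^T = M -> vdot u (M *m v) = vdot v (M *m u).
Proof. by move=> MT; rewrite vdotC vdotMl MT. Qed.

Lemma qformZ M a v : qform M (a *: v) = a ^+ 2 * qform M v.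
Proof. by rewrite /qform -scalemxAr vdotZl vdotZr mulrA expr2. Qed.

End Vdot.

Lemma qnormE (R : realType) (n : nat) (Q : 'M[R]_n) (v : 'cV[R]_n) :
  qnorm Q v = Num.sqrt (qform Q v).
Proof. by rewrite /qnorm /qform /vdot mulmxA. Qed.

Lemma qdnormE (R : realType) (n : nat) (Q : 'M[R]_n) (u : 'cV[R]_n) :
  qdnorm Q u = Num.sqrt (qform (invmx Q) u).
Proof. by rewrite /qdnorm /qform /vdot mulmxA. Qed.

Section SymPosDef.
Variables (R : realType) (n : nat) (Q : 'M[R]_n).
Hypothesis Qspd : sym_posdef Q.

Lemma posdef_qform_gt0 v : v != 0 -> 0 < qform Q v.
Proof. by rewrite /qform /vdot mulmxA; case: Qspd => _; apply. Qed.

Lemma posdef_qform_ge0 v : 0 <= qform Q v.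
Proof.
have [->|/posdef_qform_gt0/ltW //] := eqVneq v 0.
by rewrite /qform mulmx0 /vdot mulmx0 mxE.
Qed.

Lemma posdef_unitmx : Q \in unitmx.
Proof.
rewrite -unitmx_tr -row_free_unit; apply: inj_row_free => v vQ0.
apply/eqP/negPn/negP; rewrite -trmx_eq0 => /posdef_qform_gt0.
by rewrite /qform /vdot -[Q]trmxK -trmx_mul vQ0 trmx0 mulmx0 mxE ltxx.
Qed.

Lemma qform_mulinvmx u : qform Q (invmx Q *m u) = qform (invmx Q) u.
Proof. by rewrite /qform mulKVmx ?posdef_unitmx // vdotC. Qed.

Lemma posdef_invmx : sym_posdef (invmx Q).
Proof.
case: Qspd => QT _; split; first by rewrite trmx_inv QT.
move=> u u0; rewrite -mulmxA -/(vdot _ _) -/(qform _ _) -qform_mulinvmx.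
apply: posdef_qform_gt0; apply: contraNneq u0 => Pu0.
by rewrite -(mulKVmx posdef_unitmx u) Pu0 mulmx0.
Qed.

Lemma young_qform a d : 2 * vdot a d <= qform (invmx Q) a + qform Q d.
Proof.
have := posdef_qform_ge0 (invmx Q *m a - d); have [QT _] := Qspd.
rewrite /qform mulmxBr (mulKVmx posdef_unitmx) !vdotE (vdotC (invmx Q *m a) a).
rewrite (vdotC (invmx Q *m a)) vdotMl QT (mulKVmx posdef_unitmx) (vdotC d a).
lra.
Qed.

End SymPosDef.

Section Calculus.
Variables (R : realType) (n : nat) (f : 'cV[R]_n -> R).

Lemma derive_grad x d : differentiable f x -> 'D_d f x = vdot (grad f x) d.
Proof.
move=> df; rewrite deriveE // /vdot /grad !mxE.
rewrite {1}(matrix_sum_delta d) linear_sum /=.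
apply: eq_bigr => i _; rewrite big_ord1 linearZ /= !mxE -deriveE //.
by rewrite mulrC [ord0]ord1.
Qed.

Lemma convex_derive_le x d :
  convex_fun f -> differentiable f x -> 'D_d f x <= f (x + d) - f x.
Proof.
move=> fcvx fx; have fd : derivable f x d by exact: diff_derivable.
have df := cvg_dnbhs_at_right fd.
rewrite /derive -(cvg_lim _ df) //.
apply: limr_le; first by apply/cvg_ex; eexists; exact: df.
near=> h.
have h0 : 0 < h by near: h; exact: nbhs_right_gt.
have h1 : h <= 1 by near: h; exact: nbhs_right_le.
have := fcvx x (x + d) h; rewrite h1 ltW //= => /(_ isT).
have -> : (1 - h) *: x + h *: (x + d) = h *: d + x.
  by rewrite scalerDr scalerBl scale1r addrA subrK addrC.
by rewrite /= ler_pdivrMl // => cvx_h; lra.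
Unshelve. all: end_near.
Qed.

Lemma convex_first_order x u :
  convex_fun f -> differentiable f x -> f x + vdot (grad f x) (u - x) <= f u.
Proof.
move=> fcvx fx; have := convex_derive_le (u - x) fcvx fx.
by rewrite derive_grad // subrKC; lra.
Qed.

Lemma is_derive_line u d s : differentiable f (s *: d + u) ->
  is_derive s 1 (fun r => f (r *: d + u)) (vdot (grad f (s *: d + u)) d).
Proof.
move=> fs; rewrite -derive_grad //.
have fd : derivable f (s *: d + u) d by exact: diff_derivable.
have quotE : (fun h : R => h^-1 *: (f ((h *: 1 + s) *: d + u) - f (s *: d + u)))
           = (fun h : R => h^-1 *: (f (h *: d + (s *: d + u)) - f (s *: d + u))).
  by apply/funext => h; rewrite [h *: 1]mulr1 scalerDl addrA.
by apply: DeriveDef; rewrite /derivable /derive /= quotE.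
Qed.

Lemma descent_le (Q : 'M[R]_n) (L : R) :
  (forall v, differentiable f v) ->
  (forall v w, vdot (grad f v - grad f w) (v - w) <= L * qform Q (v - w)) ->
  forall u d, f (u + d) <= f u + vdot (grad f u) d + L / 2 * qform Q d.
Proof.
move=> fdiff grad_le u d.
set A := vdot (grad f u) d; set B := L / 2 * qform Q d.
(* [psi] is [f] on the segment from [u] to [u + d] minus the claimed quadratic
   bound; by [grad_le] its slope is nonpositive on ]0, 1[. *)
pose psi := (fun r => f (r *: d + u)) - (A *: id + B *: id ^+ 2).
have psi_derive (s : R) :
    is_derive s 1 psi (vdot (grad f (s *: d + u)) d - (A + 2 * s * B)).
  have := is_derive_line (fdiff (s *: d + u)).
  by move=> ?; apply: is_derive_eq; rewrite /GRing.scale /=; ring.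
have psi_cont : {within `[0, 1], continuous psi}.
  by apply: derivable_within_continuous => s _; case: (psi_derive s).
have [c] := MVT ltr01 (fun s _ => psi_derive s) psi_cont.
rewrite in_itv /= => /andP[c_gt0 _].
have slope_le : vdot (grad f (c *: d + u)) d - A <= 2 * c * B.
  have := grad_le (c *: d + u) u; rewrite addrK qformZ vdotZr vdotBl -/A.
  rewrite -ler_pdivlMl //.
  suff -> : c^-1 * (L * (c ^+ 2 * qform Q d)) = 2 * c * B by [].
  by rewrite /B; field; rewrite gt_eqF.
rewrite /psi !fctE /= scale1r scale0r add0r subr0 mulr1 expr1n expr0n /= !scaler0.
rewrite -[A%:A]/(A * 1) -[B *: 1]/(B * 1) !mulr1 => psiE.
by rewrite addrC; lra.
Qed.

End Calculus.

Section LipschitzGradient.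
Variables (R : realType) (n : nat) (Q : 'M[R]_n) (f : 'cV[R]_n -> R) (L : R).
Hypotheses (Qspd : sym_posdef Q) (fdiff : forall v, differentiable f v)
  (L_gt0 : 0 < L)
  (grad_lip : forall u v, qdnorm Q (grad f u - grad f v) <= L * qnorm Q (u - v)).

Local Notation P := (invmx Q).

Lemma grad_lip_qform u v :
  qform P (grad f u - grad f v) <= L ^+ 2 * qform Q (u - v).
Proof.
rewrite -ler_sqrt; last by rewrite mulr_ge0 ?sqr_ge0 ?(posdef_qform_ge0 Qspd).
by rewrite sqrtrM ?sqr_ge0 // sqrtr_sqr (ger0_norm (ltW L_gt0)) -qdnormE -qnormE.
Qed.

Lemma grad_monotone_le v w :
  vdot (grad f v - grad f w) (v - w) <= L * qform Q (v - w).
Proof.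
have := young_qform Qspd (grad f v - grad f w) (L *: (v - w)).
rewrite vdotZr qformZ => young; have lip := grad_lip_qform v w.
by rewrite -(ler_pM2l (_ : 0 < 2 * L)) ?mulr_gt0 //; lra.
Qed.

Lemma lip_descent_le u d :
  f (u + d) <= f u + vdot (grad f u) d + L / 2 * qform Q d.
Proof. exact: descent_le fdiff grad_monotone_le u d. Qed.

Lemma grad_step_le x :
  f (x - L^-1 *: (P *m grad f x)) <= f x - qform P (grad f x) / (2 * L).
Proof.
have := lip_descent_le x (- (L^-1 *: (P *m grad f x))).
rewrite -scaleNr qformZ vdotZr qform_mulinvmx // -/(qform P _).
suff -> : L / 2 * ((- L^-1) ^+ 2 * qform P (grad f x))
        = - (- L^-1 * qform P (grad f x)) - qform P (grad f x) / (2 * L) by lra.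
by field; rewrite gt_eqF.
Qed.

Lemma grad_eq0_of_min xs : (forall v, f xs <= f v) -> grad f xs = 0.
Proof.
move=> xs_min; apply/eqP/negPn/negP => /(posdef_qform_gt0 (posdef_invmx Qspd)) ?.
have := le_trans (xs_min _) (grad_step_le xs).
have : 0 < qform P (grad f xs) / (2 * L) by rewrite divr_gt0 ?mulr_gt0.
lra.
Qed.

Hypothesis fcvx : convex_fun f.

Lemma smooth_convex_interp_le x u :
  f x <= f u + vdot (grad f x) (x - u) - qform P (grad f x - grad f u) / (2 * L).
Proof.
set D := grad f x - grad f u; set d := L^-1 *: (P *m D).
have cvx := convex_first_order (u + d) fcvx (fdiff x).
have desc := lip_descent_le u d.
have gradD : vdot (grad f u) d = vdot (grad f x) d - L^-1 * qform P D.
  by rewrite -[grad f u](subKr (grad f x)) -/D vdotBl /d !vdotZr.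
have qformd : qform Q d = L^-2 * qform P D.
  by rewrite qformZ qform_mulinvmx // exprVn.
rewrite addrAC vdotDr in cvx; rewrite gradD qformd in desc.
rewrite -[x - u]opprB vdotNr.
suff : L / 2 * (L^-2 * qform P D) = L^-1 * qform P D - qform P D / (2 * L) by lra.
by field; rewrite gt_eqF.
Qed.

Section Method.
Variables (t : R) (xs : 'cV[R]_n) (theta : nat -> R) (x y z : nat -> 'cV[R]_n).
Hypotheses (t_gt0 : 0 < t) (t_le1 : t <= 1) (xs_min : forall v, f xs <= f v)
  (theta_gt0 : forall k, 0 < theta k) (theta0 : theta 0 = 1)
  (theta_rec : forall k, 0 <= theta k.+1 ^+ 2 - theta k.+1 <= theta k ^+ 2)
  (z0 : z 0 = x 0)
  (yE : forall k, y k.+1 = x k - L^-1 *: (P *m grad f (x k)))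
  (zE : forall k, z k.+1 = z k - (2 * t * theta k / L) *: (P *m grad f (x k)))
  (xE : forall k, x k.+1 = (1 - (theta k.+1)^-1) *: y k.+1 + (theta k.+1)^-1 *: z k.+1).

Local Notation g k := (grad f (x k)).
Local Notation G k := (qform P (g k)).

Let h k := f (x k) - G k / (2 * L).

Let potential k :=
  theta k ^+ 2 * (h k - f xs) + L / (4 * t) * qform Q (z k.+1 - xs).

Let G_ge0 k : 0 <= G k / L.
Proof. exact: divr_ge0 (posdef_qform_ge0 (posdef_invmx Qspd) _) (ltW L_gt0). Qed.

Lemma theta_ge1 k : 1 <= theta k.
Proof.
case: k => [|k]; first by rewrite theta0.
by have := theta_gt0 k.+1; case/andP: (theta_rec k); nra.
Qed.

Lemma y_le_h k : f (y k.+1) <= h k.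
Proof. by rewrite yE; exact: grad_step_le. Qed.

Lemma h_le_opt k : h k <= f xs + vdot (g k) (x k - xs) - G k / L.
Proof.
have := smooth_convex_interp_le (x k) xs; rewrite (grad_eq0_of_min xs_min) subr0 /h.
suff : G k / L = 2 * (G k / (2 * L)) by lra.
by field; rewrite gt_eqF.
Qed.

Lemma h_le_prev k :
  h k.+1 <= h k + vdot (g k.+1) (x k.+1 - y k.+1) - G k.+1 / L.
Proof.
have := smooth_convex_interp_le (x k.+1) (x k).
rewrite /h yE; set q := vdot (g k.+1) (P *m g k).
have PT : P^T = P by case: (posdef_invmx Qspd).
have -> : qform P (g k.+1 - g k) = G k.+1 - 2 * q + G k.
  by rewrite /qform mulmxBr !vdotE (vdot_sym (g k) (g k.+1) PT) -/q; ring.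
have -> : vdot (g k.+1) (x k.+1 - (x k - L^-1 *: (P *m g k)))
        = vdot (g k.+1) (x k.+1 - x k) + L^-1 * q.
  by rewrite !vdotE -/q; ring.
suff : (G k.+1 - 2 * q + G k) / (2 * L)
     = G k.+1 / (2 * L) - L^-1 * q + G k / (2 * L) by lra.
by field; rewrite gt_eqF.
Qed.

Lemma z_step k :
  L / (4 * t) * qform Q (z k.+1 - xs) = L / (4 * t) * qform Q (z k - xs)
    - theta k * vdot (g k) (z k - xs) + t * theta k ^+ 2 * (G k / L).
Proof.
have [QT _] := Qspd; have Qu := posdef_unitmx Qspd.
rewrite zE addrAC; set e := z k - xs; clearbody e.
rewrite /qform mulmxBr -scalemxAr (mulKVmx Qu) !vdotE !(vdotC (P *m g k)).
rewrite vdotMl QT (mulKVmx Qu) (vdotC e (g k)) -/(qform Q e) -/(qform P (g k)).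
by field; rewrite !gt_eqF.
Qed.

Lemma x_comb k :
  (theta k.+1 - 1) * vdot (g k.+1) (x k.+1 - y k.+1) + vdot (g k.+1) (x k.+1 - xs)
  = vdot (g k.+1) (z k.+1 - xs).
Proof.
have xdot w : vdot w (x k.+1)
    = (1 - (theta k.+1)^-1) * vdot w (y k.+1) + (theta k.+1)^-1 * vdot w (z k.+1).
  by rewrite xE !vdotE.
rewrite !vdotE !xdot.
by field; rewrite gt_eqF.
Qed.

Lemma theta_h_le k :
  theta k.+1 * (h k.+1 - f xs) <= (theta k.+1 - 1) * (h k - f xs)
    + vdot (g k.+1) (z k.+1 - xs) - theta k.+1 * (G k.+1 / L).
Proof.
have prev := h_le_prev k; have opt := h_le_opt k.+1.
have : (theta k.+1 - 1) * (h k.+1 - h k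
          - vdot (g k.+1) (x k.+1 - y k.+1) + G k.+1 / L) <= 0.
  by rewrite mulr_ge0_le0 ?subr_ge0 ?theta_ge1 //; lra.
by rewrite -x_comb; lra.
Qed.

Lemma potential_le k : potential k.+1 <= potential k.
Proof.
have h_ge : 0 <= h k - f xs by rewrite subr_ge0 (le_trans (xs_min _) (y_le_h k)).
have th_pos := theta_gt0 k.+1; have /andP[_ rec] := theta_rec k.
have := theta_h_le k; rewrite -(ler_pM2l th_pos) => scaled.
have rec' : (theta k.+1 ^+ 2 - theta k.+1) * (h k - f xs)
            <= theta k ^+ 2 * (h k - f xs) by exact: ler_wpM2r.
have t_loss : (t - 1) * (theta k.+1 ^+ 2 * (G k.+1 / L)) <= 0.
  by apply: mulr_le0_ge0; [rewrite subr_le0 | exact: mulr_ge0 (sqr_ge0 _) (G_ge0 _)].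
by rewrite /potential (z_step k.+1); lra.
Qed.

Lemma potential0_le : potential 0 <= L / (4 * t) * qform Q (x 0 - xs).
Proof.
have := h_le_opt 0.
have := ler_piMl (G_ge0 0) t_le1.
by rewrite /potential (z_step 0) theta0 expr1n !mul1r mulr1 z0; lra.
Qed.

Lemma potential_bound k : potential k <= L / (4 * t) * qform Q (x 0 - xs).
Proof.
elim: k => [|k IH]; first exact: potential0_le.
exact: le_trans (potential_le k) IH.
Qed.

Lemma ogm_rate k :
  f (y k.+1) - f xs <= L * qform Q (x 0 - xs) / (4 * t * theta k ^+ 2).
Proof.
have th2_gt0 : 0 < theta k ^+ 2 by rewrite exprn_gt0.
have D_ge : 0 <= L / (4 * t) * qform Q (z k.+1 - xs).
  by apply: mulr_ge0 (posdef_qform_ge0 Qspd _); apply/ltW/divr_gt0; rewrite ?mulr_gt0.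
have : theta k ^+ 2 * (f (y k.+1) - f xs) <= theta k ^+ 2 * (h k - f xs).
  by rewrite ler_pM2l // lerB // y_le_h.
have := potential_bound k; rewrite /potential => pot fy_le.
have -> : L * qform Q (x 0 - xs) / (4 * t * theta k ^+ 2)
        = L / (4 * t) * qform Q (x 0 - xs) / theta k ^+ 2.
  by field; rewrite !gt_eqF.
by rewrite ler_pdivlMr // mulrC; lra.
Qed.

End Method.

End LipschitzGradient.

Theorem corollary5 (R : realType) (n : nat) (Q : 'M[R]_n) (f : 'cV[R]_n -> R)
  (L t : R) (xs : 'cV[R]_n) (theta : nat -> R) (x y z : nat -> 'cV[R]_n) :
  sym_posdef Q ->
  convex_fun f ->
  (forall v : 'cV[R]_n, differentiable f v) ->
  0 < L ->
  (forall u v : 'cV[R]_n,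
      qdnorm Q (grad f u - grad f v) <= L * qnorm Q (u - v)) ->
  (forall v : 'cV[R]_n, f xs <= f v) ->
  0 < t <= 1 ->
  (forall k, 0 < theta k) ->
  theta 0%N = 1 ->
  (forall k, 0 <= theta k.+1 ^+ 2 - theta k.+1 <= theta k ^+ 2) ->
  z 0%N = x 0%N ->
  (forall k, y k.+1 = x k - L^-1 *: (invmx Q *m grad f (x k))) ->
  (forall k, z k.+1 = z k - (2 * t * theta k / L) *: (invmx Q *m grad f (x k))) ->
  (forall k, x k.+1 = (1 - (theta k.+1)^-1) *: y k.+1 + (theta k.+1)^-1 *: z k.+1) ->
  forall k : nat, (1 <= k)%N ->
    f (y k) - f xs <= L * qnorm Q (x 0%N - xs) ^+ 2 / (4 * t * theta k.-1 ^+ 2).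
Proof.
move=> Qspd fcvx fdiff L_gt0 grad_lip xs_min /andP[t_gt0 t_le1] theta_gt0 theta0
  theta_rec z0 yE zE xE [//|k] _.
rewrite qnormE sqr_sqrtr ?(posdef_qform_ge0 Qspd) //.
exact: (ogm_rate Qspd fdiff L_gt0 grad_lip fcvx t_gt0 t_le1 xs_min
  theta_gt0 theta0 theta_rec z0 yE zE xE).
Qed.
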